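(* Fix integers $j,k$ with $0\le j\le k-1$. Expand the polynomial $(2m+1)(2m+3)\cdots(2m+2k-1)$ in the variable $m$ in the basis $1,\ m,\ m(m-1),\ \dots,\ m(m-1)\cdots(m-k+1)$, and let $C^N_k$ denote the coefficient of $m(m-1)\cdots(m-N+1)$ ($0\le N\le k$). Then $$\sum_{N=j}^{k}(-1)^N C^N_k\,\frac{(2N)!}{(N-j)!\,2^{2N}}=0.$$ *)

From mathcomp Require Import all_boot all_order all_algebra.
Set Implicit Arguments. Unset Strict Implicit. Unset Printing Implicit Defensive.
Import Order.TTheory GRing.Theory Num.Theory.
Local Open Scope ring_scope.

Definition ffpoly (N : nat) : {poly rat} := \prod_(i < N) ('X - (i%:R)%:P).

Definition oddprod (k : nat) : {poly rat} :=
  \prod_(i < k) ('X *+ 2 + ((2 * i + 1)%N%:R)%:P).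

Definition is_ff_expansion (k : nat) (c : nat -> rat) : Prop :=
  oddprod k = \sum_(N < k.+1) c N *: ffpoly N.

From mathcomp Require Import all_boot all_order all_algebra.
From mathcomp Require Import ring.
Set Implicit Arguments. Unset Strict Implicit. Unset Printing Implicit Defensive.
Import Order.TTheory GRing.Theory Num.Theory.
Local Open Scope ring_scope.

(* Write x^(N) = x(x-1)...(x-N+1).  The roots of oddprod k are -1/2, -3/2,
   ..., -(2k-1)/2, and the j-th forward difference at y0 = -1/2 - j only
   samples the points y0, ..., -1/2, so it vanishes on oddprod k.  The j-th
   difference maps x^(N) to N^(j) x^(N-j), and (-1/2)^(N) splits as
   (-1/2)^(j) y0^(N-j); so that difference equals (-1/2)^(j) times the sum of
   c_N N^(j) (-1/2)^(N), which is the given sum term by term because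
   (-1/2)^(N) = (-1)^N (2N)! / (4^N N!). *)

Section FallingFactorial.
Variable R : comPzRingType.

Definition ff (N : nat) (x : R) : R := \prod_(i < N) (x - i%:R).

Lemma ff0 x : ff 0 x = 1.
Proof. by rewrite /ff big_ord0. Qed.

Lemma ffS N x : ff N.+1 x = x * ff N (x - 1).
Proof.
rewrite /ff big_ord_recl subr0; congr (_ * _); apply: eq_bigr => i _.
by rewrite lift0 -natr1; ring.
Qed.

Lemma ffSr N x : ff N.+1 x = ff N x * (x - N%:R).
Proof. by rewrite /ff big_ord_recr. Qed.

Lemma ffD j M x : ff (j + M) x = ff j x * ff M (x - j%:R).
Proof.
elim: j x => [|j IH] x; first by rewrite ff0 mul1r subr0.
by rewrite addSn !ffS IH mulrA -natr1; congr (_ * ff M _); ring.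
Qed.

Lemma ff_nat_lt j N : (N < j)%N -> ff j N%:R = 0.
Proof.
by move=> ltNj; rewrite -(subnKC ltNj) ffD ffSr subrr mulr0 mul0r.
Qed.

Lemma ff_nat_fact j N : (j <= N)%N -> ff j N%:R * (N - j)`!%:R = N`!%:R.
Proof.
move=> le_jN; have ff_fact n : ff n n%:R = n`!%:R.
  elim: n => [|n IH]; first by rewrite ff0.
  by rewrite ffS factS natrM -natr1 addrK IH.
by rewrite -!ff_fact natrB // -ffD subnKC.
Qed.

Lemma ff_diff N x : ff N.+1 (x + 1) - ff N.+1 x = N.+1%:R * ff N x.
Proof. by rewrite {1}ffS addrK ffSr -natr1; ring. Qed.

End FallingFactorial.

Lemma ff_neg_half (R : numFieldType) N :
  ff N (- 2^-1 : R) * 4 ^+ N * N`!%:R = (-1) ^+ N * (2 * N)`!%:R.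
Proof.
elim: N => [|N IH]; first by rewrite ff0 !expr0 !mul1r.
rewrite mulnS add2n !factS !natrM ffSr !exprS.
transitivity (ff N (- 2^-1 : R) * 4 ^+ N * N`!%:R * (4 * (- 2^-1 - N%:R) * N.+1%:R)).
  by ring.
by rewrite IH -!natr1 natrM; field.
Qed.

Section ForwardDifference.
Variable R : pzRingType.

Fixpoint fwd_diff (j : nat) (f : R -> R) (y : R) : R :=
  if j is j'.+1 then fwd_diff j' f (y + 1) - fwd_diff j' f y else f y.

Lemma fwd_diff_eq0 j f y :
  (forall i, (i <= j)%N -> f (y + i%:R) = 0) -> fwd_diff j f y = 0.
Proof.
elim: j y => [|j IH] y f0 /=; first by have := f0 0%N isT; rewrite addr0.
rewrite !IH ?subrr // => i le_ij.
  by apply: f0; rewrite (leq_trans le_ij).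
by rewrite -addrA (addrC 1) natr1 f0.
Qed.

Lemma fwd_diff_sum (I : Type) (r : seq I) (c : I -> R) (F : I -> R -> R) j y :
  fwd_diff j (fun x => \sum_(i <- r) c i * F i x) y
  = \sum_(i <- r) c i * fwd_diff j (F i) y.
Proof.
elim: j y => [|j IH] y //=.
by rewrite !IH -sumrB; apply: eq_bigr => i _; rewrite mulrBr.
Qed.

End ForwardDifference.

Lemma fwd_diff_ff (R : comPzRingType) j N (y : R) :
  fwd_diff j (ff N) y = ff j N%:R * ff (N - j) y.
Proof.
elim: j y => [|j IH] y /=; first by rewrite ff0 mul1r subn0.
rewrite !IH -mulrBr ffSr.
have [lt_jN | le_Nj] := ltnP j N.
  rewrite -(subnSK lt_jN) ff_diff subnSK // natrB 1?ltnW //; ring.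
have /eqP NjE : (N - j == 0)%N by rewrite subn_eq0.
rewrite subnS NjE /= !ff0 subrr mulr0 mulr1.
have [->|neq_Nj] := eqVneq N j; first by rewrite subrr mulr0.
by rewrite ff_nat_lt ?mul0r // ltn_neqAle neq_Nj.
Qed.

Lemma fact_ratio_ffE (R : numFieldType) j N : (j <= N)%N ->
  (-1) ^+ N * (2 * N)`!%:R / ((N - j)`!%:R * 2 ^+ (2 * N))
  = ff j (N%:R : R) * ff N (- 2^-1).
Proof.
move=> le_jN; rewrite exprM -ff_neg_half -(ff_nat_fact R le_jN).
have fact_neq0 : (N - j)`!%:R != 0 :> R by rewrite pnatr_eq0 -lt0n fact_gt0.
have -> : 2 ^+ 2 = 4 :> R by rewrite expr2 -natrM.
by field; rewrite fact_neq0 expf_neq0 ?pnatr_eq0.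
Qed.

Lemma horner_ffpoly N x : (ffpoly N).[x] = ff N x.
Proof.
rewrite /ffpoly /ff horner_prod; apply: eq_bigr => i _.
by rewrite hornerD hornerN hornerX hornerC.
Qed.

Lemma horner_ff_expansion k c x : is_ff_expansion k c ->
  (oddprod k).[x] = \sum_(N < k.+1) c N * ff N x.
Proof.
by move=> ->; rewrite horner_sum; apply: eq_bigr => N _; rewrite hornerZ horner_ffpoly.
Qed.

Lemma oddprod_neg_half_root k i : (i < k)%N -> (oddprod k).[- 2^-1 - i%:R] = 0.
Proof.
move=> lt_ik; rewrite /oddprod horner_prod (bigD1 (Ordinal lt_ik)) //=.
rewrite hornerD hornerMn hornerX hornerC natrD natrM mulr1n.
by rewrite [_ *+ 2 + _](_ : _ = 0) ?mul0r //; field.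
Qed.

Theorem lemma3p14 (j k : nat) (hjk : (j < k)%N) (c : nat -> rat) :
  is_ff_expansion k c ->
  \sum_(j <= N < k.+1)
     (-1) ^+ N * c N * ((2 * N)`!)%:R / (((N - j)`!)%:R * 2 ^+ (2 * N)) = 0.
Proof.
move=> expansion.
have oddprod_diff0 :
    fwd_diff j (fun x => \sum_(N < k.+1) c N * ff N x) (- 2^-1 - j%:R) = 0.
  apply: fwd_diff_eq0 => i le_ij; rewrite -horner_ff_expansion //.
  have -> : - 2^-1 - j%:R + i%:R = - 2^-1 - (j - i)%:R :> rat.
    by rewrite natrB //; ring.
  exact/oddprod_neg_half_root/(leq_ltn_trans (leq_subr i j) hjk).
rewrite fwd_diff_sum in oddprod_diff0.
rewrite -[RHS](mulr0 (ff j (- 2^-1))) -[in RHS]oddprod_diff0 big_distrr /=.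
rewrite (@big_nat_widenl _ _ _ j 0) // big_mkcondr big_mkord.
apply: eq_bigr => N _; case: leqP => [le_jN | lt_Nj]; last first.
  by rewrite fwd_diff_ff ff_nat_lt ?mul0r ?mulr0.
rewrite fwd_diff_ff mulrCA (mulrCA (ff _ _)) -ffD subnKC // -fact_ratio_ffE //.
by ring.
Qed.
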